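(* If the global optional splitting formula holds at $\tau$ with respect to $\mathbb{F}$, then for every $t\ge0$, $\mathcal{G}_t=\mathcal{N}\vee\sigma(\tau\nmid t)\vee\mathcal{F}_t$.
   Context: Let $(\Omega,\mathcal{A},\mathbb{Q})$ be a probability space with a right-continuous filtration $\mathbb{F}=(\mathcal{F}_t)_{t\ge0}$ such that $\mathcal{F}_0$ contains $\mathcal{N}^{\mathcal{F}_\infty}$, where for a $\sigma$-algebra $\mathcal{T}\subset\mathcal{A}$, $\mathcal{N}^{\mathcal{T}}$ denotes the $\sigma$-algebra generated by all subsets of $\mathcal{T}$-measurable $\mathbb{Q}$-null sets. Let $\tau$ be a random variable with values in $[0,\infty]$, let $\mathcal{N}=\mathcal{N}^{\sigma(\tau)\vee\mathcal{F}_\infty}$, and let $\mathbb{G}=(\mathcal{G}_t)_{t\ge0}$ with $\mathcal{G}_t=\mathcal{N}\vee\bigcap_{s>t}(\mathcal{F}_s\vee\sigma(\tau\wedge s))$. Identities between processes are understood up to indistinguishability outside an $\mathcal{N}$-measurable $\mathbb{Q}$-null set. For a function $Y''$ on $[0,\infty]\times(\mathbb{R}_+\times\Omega)$, $Y''(\tau)$ denotes the process $(t,\omega)\mapsto Y''(\tau(\omega),t,\omega)$. The global optional splitting formula at $\tau$ (with respect to $\mathbb{F}$) holds if for every $\mathbb{G}$-optional process $Y$ there exist $Y'\in\mathcal{O}(\mathbb{F})$ and a $\mathcal{B}[0,\infty]\otimes\mathcal{O}(\mathbb{F})$-measurable function $Y''$ on $[0,\infty]\times(\mathbb{R}_+\times\Omega)$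 with $Y=Y'\mathbf{1}_{[0,\tau)}+Y''(\tau)\mathbf{1}_{[\tau,\infty)}$. For $a,b\in[0,\infty]$, $a\nmid b=a$ if $a\le b$ and $a\nmid b=\infty$ if $a>b$. *)

From HB Require Import structures.
From mathcomp Require Import all_boot all_order all_algebra.
From mathcomp Require Import all_classical all_reals all_analysis measurable_realfun.
Set Implicit Arguments. Unset Strict Implicit. Unset Printing Implicit Defensive.
Import Order.TTheory GRing.Theory Num.Theory.
Import numFieldNormedType.Exports.
Local Open Scope classical_set_scope.
Local Open Scope ring_scope.

Section Defs.
Context (R : realType) (d : measure_display) (Omega : measurableType d).

Definition sjoin (A B : set (set Omega)) : set (set Omega) := <<s A `|` B >>.

Definition sigma_of (f : Omega -> \bar R) : set (set Omega) :=
  [set f @^-1` B | B in [set B : set (\bar R) | measurable B]].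

Definition null_sigma (Q : probability Omega R) (T : set (set Omega)) :
  set (set Omega) :=
  <<s [set B | exists C, T C /\ Q C = 0%E /\ B `<=` C] >>.

Definition Finfty (F : R -> set (set Omega)) : set (set Omega) :=
  <<s \bigcup_(t in `[0, +oo[%classic) F t >>.

Definition Tsig (F : R -> set (set Omega)) (tau : Omega -> \bar R) :=
  sjoin (sigma_of tau) (Finfty F).

Definition Nsig (Q : probability Omega R) (F : R -> set (set Omega))
  (tau : Omega -> \bar R) : set (set Omega) := null_sigma Q (Tsig F tau).

Definition Gfilt (Q : probability Omega R) (F : R -> set (set Omega))
  (tau : Omega -> \bar R) (t : R) : set (set Omega) :=
  sjoin (Nsig Q F tau)
    (\bigcap_(s in `]t, +oo[%classic)
        sjoin (F s) (sigma_of (fun w => Order.min (tau w) s%:E))).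

Definition nmid (a b : \bar R) : \bar R := if (a <= b)%E then a else +oo%E.

(* Processes are indexed by R; only times t >= 0 matter. *)
Definition cadlag_adapted (H : R -> set (set Omega)) (X : R -> Omega -> R) :=
  (forall w (t : R), 0 <= t ->
      (fun s => X s w) @ t^'+ --> X t w) /\
  (forall w (t : R), 0 < t -> cvg ((fun s => X s w) @ t^'-)) /\
  (forall (t : R), 0 <= t -> forall B : set R, measurable B ->
      H t [set w | B (X t w)]).

(* optional sigma-algebra O(H) on R_+ x Omega (realized on R x Omega:
   only the trace on {t >= 0} matters), generated by the cadlag H-adapted
   real-valued processes *)
Definition optional_sigma (H : R -> set (set Omega)) : set (set (R * Omega)) :=
  <<s [set S | exists (X : R -> Omega -> R) (B : set R),
          cadlag_adapted H X /\ measurable B /\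
          S = [set p : R * Omega | 0 <= p.1 /\ B (X p.1 p.2)]] >>.

Definition is_optional (H : R -> set (set Omega)) (Y : R -> Omega -> R) :=
  forall B : set R, measurable B ->
    optional_sigma H [set p : R * Omega | 0 <= p.1 /\ B (Y p.1 p.2)].

Definition prod_borel_optional (H : R -> set (set Omega)) :
  set (set (\bar R * (R * Omega))) :=
  <<s [set S | exists (A : set (\bar R)) (O : set (R * Omega)),
          measurable A /\ optional_sigma H O /\
          S = [set q | A q.1 /\ O q.2]] >>.

Definition is_prod_measurable (H : R -> set (set Omega))
  (Y2 : \bar R -> R -> Omega -> R) :=
  forall B : set R, measurable B ->
    prod_borel_optional H
      [set q | (0 <= q.1)%E /\ 0 <= q.2.1 /\ B (Y2 q.1 q.2.1 q.2.2)].

End Defs.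

Definition global_optional_splitting {R : realType} {d : measure_display}
  {Omega : measurableType d} (Q : probability Omega R)
  (F : R -> set (set Omega)) (tau : Omega -> \bar R) : Prop :=
  forall Y : R -> Omega -> R, is_optional (Gfilt Q F tau) Y ->
  exists (Y1 : R -> Omega -> R) (Y2 : \bar R -> R -> Omega -> R),
    is_optional F Y1 /\ is_prod_measurable F Y2 /\
    (* identity up to indistinguishability outside an N-measurable null set,
       i.e. outside a (sigma(tau) \/ F_oo)-measurable Q-null set *)
    exists C : set Omega, Tsig F tau C /\ Q C = 0%E /\
      forall w, ~ C w -> forall t : R, 0 <= t ->
        Y t w = (if (t%:E < tau w)%E then Y1 t w else Y2 (tau w) t w).

From HB Require Import structures.
From mathcomp Require Import all_boot all_order all_algebra.
From mathcomp Require Import all_classical all_reals all_analysis measurable_realfun.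
Import Order.TTheory GRing.Theory Num.Theory.
Import numFieldNormedType.Exports.
Set Implicit Arguments. Unset Strict Implicit. Unset Printing Implicit Defensive.
Local Open Scope classical_set_scope.
Local Open Scope ring_scope.

(* The inclusion of the right-hand side in [G_t] holds because [tau nmid t]
   is a Borel function of [tau /\ s] for every [s > t].  Conversely, for
   [A] in [G_t] the process [1_A 1_{[t, oo)}] is cadlag and G-adapted, hence
   G-optional; evaluating its splitting at time [t] writes [1_A], outside an
   N-null set, as [Y'_t] on [{t < tau}] plus [Y''(tau)_t] on [{tau <= t}].
   The first term is F_t-measurable, and on [{tau <= t}] the random variable
   [tau] coincides with [tau nmid t], so the second term is measurable for
   [sigma(tau nmid t) \/ F_t]. *)

Section SigmaAlgebraClosure.
Variables (T : Type) (G : set (set T)).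
Hypothesis hG : sigma_algebra setT G.

Lemma sigma_algebra_set0 : G set0.
Proof. by case: hG. Qed.

Lemma sigma_algebra_setC A : G A -> G (~` A).
Proof. by case: hG => _ hC _ hA; rewrite -setTD; apply: hC. Qed.

Lemma sigma_algebra_setT : G setT.
Proof. by rewrite -setC0; apply: sigma_algebra_setC; apply: sigma_algebra_set0. Qed.

Lemma sigma_algebra_setU A B : G A -> G B -> G (A `|` B).
Proof.
case: hG => _ _ hU hA hB.
suff -> : A `|` B = \bigcup_k (fun n => if n is 0%N then A else B) k.
  by apply: hU => -[|n].
apply/seteqP; split => x.
  by case=> h; [exists 0%N | exists 1%N].
by case=> -[|n] _ h; [left|right].
Qed.

Lemma sigma_algebra_setI A B : G A -> G B -> G (A `&` B).
Proof.
move=> hA hB; rewrite -[A]setCK -[B]setCK -setCU.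
by apply/sigma_algebra_setC/sigma_algebra_setU; apply: sigma_algebra_setC.
Qed.

Lemma sigma_algebra_setD A B : G A -> G B -> G (A `\` B).
Proof. by move=> hA hB; rewrite setDE; apply: sigma_algebra_setI => //; apply: sigma_algebra_setC. Qed.

Lemma sigma_algebra_cst (P : Prop) : G [set _ | P].
Proof.
have [hP|hP] := pselect P.
  have -> : [set _ : T | P] = setT by apply/seteqP; split.
  exact: sigma_algebra_setT.
have -> : [set _ : T | P] = set0 by apply/seteqP; split.
exact: sigma_algebra_set0.
Qed.

Lemma sigma_algebra_preimage_if (U : Type) (A : set T) (P : set U) (a b : U) :
  G A -> G [set w | P (if `[< A w >] then a else b)].
Proof.
move=> hA.
have -> : [set w | P (if `[< A w >] then a else b)] =
    (A `&` [set _ | P a]) `|` (~` A `&` [set _ | P b]).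
  apply/seteqP; split => w /=; case: (asboolP (A w)) => h.
  - by left.
  - by right.
  - by case=> -[].
  - by case=> -[].
by apply: sigma_algebra_setU; apply: sigma_algebra_setI;
  [|exact: sigma_algebra_cst|apply: sigma_algebra_setC|exact: sigma_algebra_cst].
Qed.

Lemma sigma_algebra_eq_outside (A D C : set T) :
  (forall B, B `<=` C -> G B) -> G D -> (forall w, ~ C w -> A w <-> D w) -> G A.
Proof.
move=> hC hD hAD.
have -> : A = (A `&` C) `|` (D `\` C).
  apply/seteqP; split => w.
    by move=> Aw; have [Cw|nCw] := pselect (C w); [left|right; split; rewrite -?hAD].
  by case=> [[]//|[Dw nCw]]; rewrite hAD.
by apply: sigma_algebra_setU; [apply: hC => w []|apply: sigma_algebra_setD => //; apply: hC].
Qed.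

End SigmaAlgebraClosure.

Section OptionalSections.
Variables (R : realType) (d : measure_display) (Omega : measurableType d).
Variables (F : R -> set (set Omega)) (t : R).
Hypotheses (t_ge0 : 0 <= t) (hFt : sigma_algebra setT (F t)).

Lemma optional_sigma_section S : optional_sigma F S -> F t [set w | S (t, w)].
Proof.
apply: (smallest_sub (C := sigma_algebra setT)
  (X := [set S | F t [set w | S (t, w)]])); last first.
  move=> _ [X [B [hX [mB ->]]]] /=.
  rewrite (_ : [set w | _] = [set w | B (X t w)]); first exact: hX.2.2.
  by apply/seteqP; split => w /=; [case|].
split => /=.
- exact: sigma_algebra_set0.
- move=> A hA.
  rewrite (_ : [set w | _] = ~` [set w | A (t, w)]); first exact: sigma_algebra_setC.
  by apply/seteqP; split => w /=; [case|].
- move=> A hA.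
  rewrite (_ : [set w | _] = \bigcup_k [set w | A k (t, w)]); first by case: hFt => _ _; apply.
  by apply/seteqP; split => w /= [k _ h]; exists k.
Qed.

Lemma prod_borel_optional_section (G : set (set Omega)) (E : set Omega)
    (g : Omega -> \bar R) :
  sigma_algebra setT G -> F t `<=` G -> G E ->
  (forall A, measurable A -> G (E `&` [set w | A (g w)])) ->
  forall S, prod_borel_optional F S -> G (E `&` [set w | S (g w, (t, w))]).
Proof.
move=> hG hFG hE hEg.
apply: (smallest_sub (C := sigma_algebra setT)
  (X := [set S | G (E `&` [set w | S (g w, (t, w))])])); last first.
  move=> _ [A [B [mA [hB ->]]]] /=.
  rewrite (_ : _ `&` _ = (E `&` [set w | A (g w)]) `&` [set w | B (t, w)]).
    by apply: sigma_algebra_setI => //; [exact: hEg|apply/hFG/optional_sigma_section].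
  by apply/seteqP; split => w /= => [[? [? ?]]|[[? ?] ?]].
split => /=.
- rewrite (_ : _ `&` _ = set0); first exact: sigma_algebra_set0.
  by apply/seteqP; split => w /= [].
- move=> S hS.
  rewrite (_ : _ `&` _ = E `\` (E `&` [set w | S (g w, (t, w))])).
    exact: sigma_algebra_setD.
  apply/seteqP; split => w /= [Ew hw]; split => //.
    by case: hw => _ hw [].
  by split => // hS'; apply: hw.
- move=> S hS.
  rewrite (_ : _ `&` _ = \bigcup_k (E `&` [set w | S k (g w, (t, w))])); first by case: hG => _ _; apply.
  apply/seteqP; split => w /=; first by case=> Ew [k _ hk]; exists k.
  by case=> k _ [Ew hk]; split => //; exists k.
Qed.

End OptionalSections.

Lemma cadlag_adapted_is_optional (R : realType) (d : measure_display)
    (Omega : measurableType d) (H : R -> set (set Omega)) (X : R -> Omega -> R) :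
  cadlag_adapted H X -> is_optional H X.
Proof. by move=> hX B mB; apply: sub_sigma_algebra; exists X, B. Qed.

Section StepFunction.
Variables (R : realType) (t c : R).

Let step (s : R) := if t <= s then c else 0.

Lemma step_cvg_right (u : R) : step @ u^'+ --> step u.
Proof.
rewrite /step; have [tu|ut] := leP t u; apply: cvg_near_cst; near=> s.
  have : u < s by near: s; exact: nbhs_right_gt.
  by move=> /ltW h; rewrite (le_trans tu h).
have : s < t by near: s; exact: nbhs_right_lt.
by move=> h; rewrite leNgt h.
Unshelve. all: by end_near.
Qed.

Lemma step_cvg_left (u : R) : cvg (step @ u^'-).
Proof.
rewrite /step; have [tu|ut] := ltP t u.
  apply: cvgP (cvg_near_cst c _); near=> s.
  have : t < s by near: s; exact: nbhs_left_gt.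
  by move=> /ltW ->.
apply: cvgP (cvg_near_cst 0 _); near=> s.
have : s < u by near: s; exact: nbhs_left_lt.
by move=> h; rewrite leNgt (lt_le_trans h ut).
Unshelve. all: by end_near.
Qed.

End StepFunction.

Section Nmid.
Variable R : realType.
Local Open Scope ereal_scope.

Lemma nmid_eqy (a : \bar R) (t : R) : nmid a t%:E = +oo <-> t%:E < a.
Proof.
rewrite /nmid; case: leP => h; split => //.
by move=> e; move: h; rewrite e leNgt ltry.
Qed.

Lemma nmid_le (a b : \bar R) : a <= b -> nmid a b = a.
Proof. by rewrite /nmid => ->. Qed.

Lemma nmid_min (a : \bar R) (t s : R) : (t < s)%R -> nmid (Order.min a s%:E) t%:E = nmid a t%:E.
Proof.
move=> ts; rewrite /nmid; have [at_|ta] := leP a t%:E.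
  by rewrite min_l // (le_trans at_) // lee_fin ltW.
by rewrite leNgt lt_min ta lte_fin ts.
Qed.

Lemma measurable_nmid (b : \bar R) : measurable_fun setT (fun a : \bar R => nmid a b).
Proof.
move=> _ B mB; rewrite setTI.
have -> : (fun a => nmid a b) @^-1` B =
    (B `&` `]-oo, b]%classic) `|` (~` `]-oo, b]%classic `&` [set _ | B +oo]).
  apply/seteqP; split => x /=; rewrite /nmid in_itv /=; case: ifP => h.
  - by left.
  - by right.
  - by case=> [[]|[]].
  - by case=> [[]|[]].
apply: measurableU; apply: measurableI => //.
- exact: emeasurable_itv.
- by apply: measurableC; exact: emeasurable_itv.
- have [hB|hB] := pselect (B +oo).
    by rewrite (_ : [set _ | _] = setT) //; apply/seteqP; split.
  by rewrite (_ : [set _ | _] = set0) //; apply/seteqP; split.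
Qed.

End Nmid.

Lemma sigma_of_comp (R : realType) (d : measure_display) (Omega : measurableType d)
    (f : Omega -> \bar R) (g : \bar R -> \bar R) :
  measurable_fun setT g -> sigma_of (g \o f) `<=` sigma_of f.
Proof.
move=> mg _ [B mB <-]; exists (g @^-1` B) => //.
by rewrite -[g @^-1` B]setTI; exact: mg.
Qed.

Section SplittingAtTime.
Variables (R : realType) (d : measure_display) (Omega : measurableType d).
Variables (F : R -> set (set Omega)) (tau : Omega -> \bar R) (t : R).
Hypotheses (t_ge0 : 0 <= t) (hFt : sigma_algebra setT (F t)).
Hypothesis tau_ge0 : forall w, (0 <= tau w)%E.
Variable G : set (set Omega).
Hypotheses (hG : sigma_algebra setT G) (hFG : F t `<=` G).
Hypothesis hnmidG : sigma_of (fun w => nmid (tau w) t%:E) `<=` G.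

Lemma lt_tau_measurable : G [set w | (t%:E < tau w)%E].
Proof.
apply: hnmidG; exists [set +oo%E]; first exact: emeasurable_set1.
by apply/seteqP; split => w /=; rewrite nmid_eqy.
Qed.

(* On [{tau <= t}] the random variable [tau] is [tau nmid t], which is finite there. *)
Lemma le_tau_preimage_measurable (A : set (\bar R)) : measurable A ->
  G (~` [set w | (t%:E < tau w)%E] `&` [set w | A (tau w)]).
Proof.
move=> mA; apply: hnmidG; exists (A `&` ~` [set +oo%E]).
  by apply: measurableI => //; apply: measurableC; exact: emeasurable_set1.
apply/seteqP; split => w /= [hA hw].
  have htw : ~ (t%:E < tau w)%E by rewrite -nmid_eqy.
  by move: hA; rewrite nmid_le // leNgt; apply/negP.
have htw : (tau w <= t%:E)%E by rewrite leNgt; apply/negP.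
by rewrite nmid_le //; split => // e; move: htw; rewrite e leNgt ltry.
Qed.

Lemma splice_at_measurable (Y1 : R -> Omega -> R) (Y2 : \bar R -> R -> Omega -> R) :
  is_optional F Y1 -> is_prod_measurable F Y2 -> forall B, measurable B ->
  G [set w | B (if (t%:E < tau w)%E then Y1 t w else Y2 (tau w) t w)].
Proof.
move=> hY1 hY2 B mB.
have hY1t : F t [set w | B (Y1 t w)].
  have := optional_sigma_section t_ge0 hFt (hY1 B mB).
  by rewrite (_ : [set w | _] = [set w | B (Y1 t w)]) //; apply/seteqP; split => w /= => [[]|].
have hY2t : G (~` [set w | (t%:E < tau w)%E] `&` [set w | B (Y2 (tau w) t w)]).
  rewrite (_ : [set w | B (Y2 (tau w) t w)] =
      [set w | (0 <= tau w)%E /\ 0 <= t /\ B (Y2 (tau w) t w)]).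
    exact: (prod_borel_optional_section t_ge0 hFt hG hFG
      (sigma_algebra_setC hG lt_tau_measurable) le_tau_preimage_measurable (hY2 B mB)).
  by apply/seteqP; split => w /= => [hw|[_ [_ hw]]].
rewrite (_ : [set w | _] = ([set w | (t%:E < tau w)%E] `&` [set w | B (Y1 t w)]) `|`
    (~` [set w | (t%:E < tau w)%E] `&` [set w | B (Y2 (tau w) t w)])).
  by apply: sigma_algebra_setU => //; apply: sigma_algebra_setI => //;
    [exact: lt_tau_measurable|exact: hFG].
apply/seteqP; split => w /=; case: ifPn => h.
- by left.
- by right; split => //; apply/negP.
- by case=> -[].
- by case=> -[] // /negP.
Qed.

End SplittingAtTime.

Section ProgressiveEnlargement.
Variables (R : realType) (d : measure_display) (Omega : measurableType d).
Variables (Q : probability Omega R) (F : R -> set (set Omega)) (tau : Omega -> \bar R).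

Local Notation G := (Gfilt Q F tau).
Local Notation N := (Nsig Q F tau).
Local Notation tau_nmid t := (fun w => nmid (tau w) t%:E).

Lemma Gfilt_mono (u v : R) : u <= v -> G u `<=` G v.
Proof.
move=> uv; apply: sub_sigma_algebra2 => X [hX|hX]; [by left|right].
move=> s /=; rewrite in_itv /= andbT => hs; apply: hX => /=.
by rewrite in_itv /= andbT (le_lt_trans uv hs).
Qed.

Lemma indicator_after_is_optional (t : R) (A : set Omega) : G t A ->
  is_optional G (fun s w => if t <= s then (if `[< A w >] then 1 else 0) else 0).
Proof.
move=> hA; apply: cadlag_adapted_is_optional; split; [|split].
- by move=> w u _; exact: step_cvg_right.
- by move=> w u _; exact: step_cvg_left.
- move=> u _ B mB.
  have hGu : sigma_algebra setT (G u) by exact: smallest_sigma_algebra.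
  have [tu|_] := leP t u => /=; last exact: sigma_algebra_cst.
  have hAu : G u A by apply: (Gfilt_mono tu).
  exact (sigma_algebra_preimage_if hGu B 1 0 hAu).
Qed.

Lemma join_nmid_sub_Gfilt (t : R) : 0 <= t ->
  (forall s u, 0 <= s -> s <= u -> F s `<=` F u) ->
  sjoin (sjoin N (sigma_of (tau_nmid t))) (F t) `<=` G t.
Proof.
move=> t0 hFinc; apply: smallest_sub; first exact: smallest_sigma_algebra.
move=> X [|hX]; last first.
  apply: sub_sigma_algebra; right => s /=; rewrite in_itv /= andbT => ts.
  by apply: sub_sigma_algebra; left; exact: (hFinc t s t0 (ltW ts)).
apply: smallest_sub X; first exact: smallest_sigma_algebra.
move=> X [hX|hX]; first by apply: sub_sigma_algebra; left.
apply: sub_sigma_algebra; right => s /=; rewrite in_itv /= andbT => ts.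
apply: sub_sigma_algebra; right.
have tau_nmidE : tau_nmid t = (fun a => nmid a t%:E) \o (fun w => Order.min (tau w) s%:E).
  by apply/funext => w /=; rewrite nmid_min.
by move: hX; rewrite tau_nmidE; apply: (sigma_of_comp (measurable_nmid _)).
Qed.

Lemma Gfilt_sub_join_nmid (t : R) : 0 <= t -> sigma_algebra setT (F t) ->
  (forall w, (0 <= tau w)%E) -> global_optional_splitting Q F tau ->
  G t `<=` sjoin (sjoin N (sigma_of (tau_nmid t))) (F t).
Proof.
move=> t0 hFt tau_ge0 hsplit A hA.
set J := sjoin _ (F t).
have hJ : sigma_algebra setT J by exact: smallest_sigma_algebra.
have [Y1 [Y2 [hY1 [hY2 [C [hC [QC0 hYC]]]]]]] :=
  hsplit _ (indicator_after_is_optional hA).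
apply: (sigma_algebra_eq_outside hJ (C := C)
  (D := [set w | [set 1] (if (t%:E < tau w)%E then Y1 t w else Y2 (tau w) t w)])).
- move=> B BC; apply: sub_sigma_algebra; left; apply: sub_sigma_algebra; left.
  by apply: sub_sigma_algebra; exists C.
- apply: (splice_at_measurable t0 hFt tau_ge0 hJ _ _ hY1 hY2 (measurable_set1 1)).
  + by move=> X hX; apply: sub_sigma_algebra; right.
  + by move=> X hX; apply: sub_sigma_algebra; left; apply: sub_sigma_algebra; right.
- move=> w nCw; rewrite /= -(hYC w nCw t t0) lexx.
  by case: asboolP => hAw; split => // /esym/eqP; rewrite oner_eq0.
Qed.

End ProgressiveEnlargement.

Theorem mainTheorem2 (R : realType) (d : measure_display)
  (Omega : measurableType d) (Q : probability Omega R)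
  (F : R -> set (set Omega)) (tau : Omega -> \bar R)
  (hFsig : forall t, 0 <= t -> sigma_algebra setT (F t))
  (hFA : forall t, 0 <= t -> F t `<=` measurable)
  (hFinc : forall s t, 0 <= s -> s <= t -> F s `<=` F t)
  (hFrc : forall t, 0 <= t -> F t = \bigcap_(s in `]t, +oo[%classic) F s)
  (hF0 : null_sigma Q (Finfty F) `<=` F 0)
  (htau_meas : measurable_fun setT tau)
  (htau_pos : forall w, (0 <= tau w)%E)
  (hsplit : global_optional_splitting Q F tau) :
  forall t : R, 0 <= t ->
    Gfilt Q F tau t =
    sjoin (sjoin (Nsig Q F tau) (sigma_of (fun w => nmid (tau w) t%:E))) (F t).
Proof.
move=> t t0; apply/seteqP; split.
- exact: Gfilt_sub_join_nmid t0 (hFsig t t0) htau_pos hsplit.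
- exact: join_nmid_sub_Gfilt t0 hFinc.
Qed.
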